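(* Regard $\phi_0(a,\beta_0,r,\mu)=1-\dfrac{(a\beta_0-\sqrt r)^2}{a\mu+r}$ as a smooth function of positive parameters $a,\beta_0,r,\mu$. For every parameter value $(A,r,\beta_0,a,\mu)\in(0,\infty)^5$ satisfying $$a\beta_0<\sqrt r,\qquad \phi_0<\frac{\beta_0A}{\mu+\frac ra}<1,\qquad \beta_0<1,$$ one has $$\frac{\partial\phi_0}{\partial a}>0,\qquad \frac{\partial\phi_0}{\partial \beta_0}>0,\qquad \frac{\partial\phi_0}{\partial \mu}>0,\qquad \frac{\partial\phi_0}{\partial r}<0.$$ *)

From Stdlib Require Import Reals Lra.
From Coquelicot Require Import Coquelicot.
Open Scope R_scope.

Definition phi0 (a beta0 r mu : R) : R :=
  1 - (a * beta0 - sqrt r) ^ 2 / (a * mu + r).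

(* Each partial derivative of [phi0] factors into terms of fixed sign, the only
   non-obvious one being [sqrt r - a * beta0], positive by hypothesis. *)
From Stdlib Require Import Reals Lra.
From Coquelicot Require Import Coquelicot.
Open Scope R_scope.

Lemma is_derive_phi0_a (a beta0 r mu : R) : a * mu + r <> 0 ->
  is_derive (fun x => phi0 x beta0 r mu) a
    ((sqrt r - a * beta0) * (2 * beta0 * (a * mu + r) + (sqrt r - a * beta0) * mu)
       / (a * mu + r) ^ 2).
Proof. intros hD; unfold phi0; auto_derive; [exact hD | field; exact hD]. Qed.

Lemma is_derive_phi0_beta0 (a beta0 r mu : R) : a * mu + r <> 0 ->
  is_derive (fun x => phi0 a x r mu) beta0
    (2 * a * (sqrt r - a * beta0) / (a * mu + r)).
Proof. intros hD; unfold phi0; auto_derive; [exact I | field; exact hD]. Qed.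

Lemma is_derive_phi0_mu (a beta0 r mu : R) : a * mu + r <> 0 ->
  is_derive (fun x => phi0 a beta0 r x) mu
    (a * (a * beta0 - sqrt r) ^ 2 / (a * mu + r) ^ 2).
Proof. intros hD; unfold phi0; auto_derive; [exact hD | field; exact hD]. Qed.

Lemma is_derive_phi0_r (a beta0 r mu : R) : 0 < r -> a * mu + r <> 0 ->
  is_derive (fun x => phi0 a beta0 x mu) r
    (- (a * (sqrt r - a * beta0) * (mu + beta0 * sqrt r))
       / (sqrt r * (a * mu + r) ^ 2)).
Proof.
  intros hr hD; unfold phi0.
  assert (hs : 0 < sqrt r) by (apply sqrt_lt_R0; exact hr).
  assert (hss : sqrt r * sqrt r = r) by (apply sqrt_sqrt; lra).
  auto_derive; [repeat split; lra |].
  (* [field] can only cancel the factor [sqrt r] once [r] is written as its square *)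
  set (s := sqrt r) in *; rewrite <- hss; field.
  rewrite hss; split; lra.
Qed.

Section Signs.

Variables a beta0 r mu : R.
Hypotheses (ha : 0 < a) (hb : 0 < beta0) (hr : 0 < r) (hmu : 0 < mu).
Hypothesis below_sqrt : a * beta0 < sqrt r.

Let hD : 0 < a * mu + r.
Proof. nra. Qed.

Let hgap : 0 < sqrt r - a * beta0.
Proof. lra. Qed.

Lemma Derive_phi0_a_gt0 : 0 < Derive (fun x => phi0 x beta0 r mu) a.
Proof.
  erewrite is_derive_unique; [| apply is_derive_phi0_a; lra].
  apply Rdiv_lt_0_compat; [| apply pow_lt; exact hD].
  apply Rmult_lt_0_compat; [exact hgap | nra].
Qed.

Lemma Derive_phi0_beta0_gt0 : 0 < Derive (fun x => phi0 a x r mu) beta0.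
Proof.
  erewrite is_derive_unique; [| apply is_derive_phi0_beta0; lra].
  apply Rdiv_lt_0_compat; [nra | exact hD].
Qed.

Lemma Derive_phi0_mu_gt0 : 0 < Derive (fun x => phi0 a beta0 r x) mu.
Proof.
  erewrite is_derive_unique; [| apply is_derive_phi0_mu; lra].
  apply Rdiv_lt_0_compat; [| apply pow_lt; exact hD].
  apply Rmult_lt_0_compat; [exact ha |].
  replace ((a * beta0 - sqrt r) ^ 2) with ((sqrt r - a * beta0) ^ 2) by ring.
  apply pow_lt; exact hgap.
Qed.

Lemma Derive_phi0_r_lt0 : Derive (fun x => phi0 a beta0 x mu) r < 0.
Proof.
  erewrite is_derive_unique; [| apply is_derive_phi0_r; [exact hr | lra]].
  assert (hs : 0 < sqrt r) by (apply sqrt_lt_R0; exact hr).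
  unfold Rdiv; rewrite Ropp_mult_distr_l_reverse.
  apply Ropp_lt_gt_0_contravar, Rmult_lt_0_compat.
  - apply Rmult_lt_0_compat; [apply Rmult_lt_0_compat; lra | nra].
  - apply Rinv_0_lt_compat, Rmult_lt_0_compat; [exact hs | apply pow_lt; exact hD].
Qed.

End Signs.

Theorem lemma5p5 (A r beta0 a mu : R)
  (hA : 0 < A) (hr : 0 < r) (hb : 0 < beta0) (ha : 0 < a) (hmu : 0 < mu)
  (h1 : a * beta0 < sqrt r)
  (h2 : phi0 a beta0 r mu < beta0 * A / (mu + r / a))
  (h3 : beta0 * A / (mu + r / a) < 1)
  (h4 : beta0 < 1) :
  Derive (fun x => phi0 x beta0 r mu) a > 0 /\
  Derive (fun x => phi0 a x r mu) beta0 > 0 /\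
  Derive (fun x => phi0 a beta0 r x) mu > 0 /\
  Derive (fun x => phi0 a beta0 x mu) r < 0.
Proof.
  repeat split.
  - exact (Derive_phi0_a_gt0 a beta0 r mu ha hb hr hmu h1).
  - exact (Derive_phi0_beta0_gt0 a beta0 r mu ha hr hmu h1).
  - exact (Derive_phi0_mu_gt0 a beta0 r mu ha hr hmu h1).
  - exact (Derive_phi0_r_lt0 a beta0 r mu ha hb hr hmu h1).
Qed.
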